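(* Let $n\ge1$, identify $\mathbb{R}^{n+1}=\mathbb{R}^n\times\mathbb{R}$, and let $K\subset\mathbb{R}^{n+1}$ be a convex compact set containing a point $(x_*,y_* )$ with $y_*\le0$. Then the following are equivalent: (a) for every positive-valued continuous function $f\colon\mathbb{R}^n\to\mathbb{R}$ whose epigraph $L$ satisfies $K\cap L=\emptyset$, the upper and lower equidistant functions associated with $K$ and $L$ satisfy $G^-(x)=G^+(x)$ for all $x\in\mathbb{R}^n$; (b) the same holds for every positive-valued convex function $f\colon\mathbb{R}^n\to\mathbb{R}$ whose epigraph is disjoint from $K$; (c) there exist no point $x_0\in\mathbb{R}^n$ and real numbers $0<y_1<y_2$ such that $(x_0,y_1)\notin K$ and $(x_0,y_2)\in K$.
   Context: $d(p,A)=\inf\{|p-q|\mid q\in A\}$ (Euclidean distance); $L=\{(x,y)\mid f(x)\le y\}$. The upper and lower equidistant functions are $G^+(x)=\sup\{y\mid d((x,y),K)=d((x,y),L)\}$ and $G^-(x)=\inf\{y\mid d((x,y),K)=d((x,y),L)\}$ (real numbers under these assumptions). *)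

From HB Require Import structures.
From mathcomp Require Import all_boot all_order all_algebra.
From mathcomp Require Import all_classical all_reals all_analysis.
Set Implicit Arguments. Unset Strict Implicit. Unset Printing Implicit Defensive.
Import Order.TTheory GRing.Theory Num.Theory.
Import numFieldNormedType.Exports.
Local Open Scope classical_set_scope.
Local Open Scope ring_scope.

Definition pt (R : realType) (n : nat) := ('rV[R]_n * R)%type.

Definition edist (R : realType) (n : nat) (p q : pt R n) : R :=
  Num.sqrt (\sum_(i < n) (p.1 0 i - q.1 0 i) ^+ 2 + (p.2 - q.2) ^+ 2).

Definition setdist (R : realType) (n : nat) (p : pt R n) (A : set (pt R n)) : R :=
  inf [set edist p q | q in A].

Definition epigraph (R : realType) (n : nat) (f : 'rV[R]_n -> R) : set (pt R n) :=
  [set p | f p.1 <= p.2].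

Definition equiset (R : realType) (n : nat) (K L : set (pt R n)) (x : 'rV[R]_n) : set R :=
  [set y | setdist (x, y) K = setdist (x, y) L].
Definition Gplus (R : realType) (n : nat) (K L : set (pt R n)) (x : 'rV[R]_n) : R :=
  sup (equiset K L x).
Definition Gminus (R : realType) (n : nat) (K L : set (pt R n)) (x : 'rV[R]_n) : R :=
  inf (equiset K L x).

Definition convex_set_pt (R : realType) (n : nat) (K : set (pt R n)) : Prop :=
  forall p q : pt R n, K p -> K q -> forall t : R, 0 <= t <= 1 ->
    K (t *: p.1 + (1 - t) *: q.1, t * p.2 + (1 - t) * q.2).

Definition convex_fun_rV (R : realType) (n : nat) (f : 'rV[R]_n -> R) : Prop :=
  forall x y : 'rV[R]_n, forall t : R, 0 <= t <= 1 ->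
    f (t *: x + (1 - t) *: y) <= t * f x + (1 - t) * f y.

From Pilot Require Import Defs.
From HB Require Import structures.
From mathcomp Require Import all_boot all_order all_algebra.
From mathcomp Require Import all_classical all_reals all_analysis.
Import Order.TTheory GRing.Theory Num.Theory.
Import numFieldNormedType.Exports.
Local Open Scope classical_set_scope.
Local Open Scope ring_scope.
From mathcomp Require Import ring lra.
Set Implicit Arguments. Unset Strict Implicit. Unset Printing Implicit Defensive.

(* (c) => (a): if [K] has no vertical gap above height [0], suppose [(x, y1)]
   and [(x, y2)], [y1 < y2], are both equidistant from [K] and the epigraph [L].
   Let [k] be the point of [K] nearest to [(x, y2)] and [(a, b)] the point of
   [L] nearest to [(x, y1)].  Lowering [k] inside [K] produces a point of [K]
   closer to [(x, y1)] than [(a, b)], unless [b = y1] and [k] is at height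
   [y2]; in that case continuity of [f] yields a point of [L] closer to
   [(x, y2)] than [k].  Convex functions are continuous, so (c) => (b) too.
   Conversely, a gap gives a vertical line [{xf} x R] meeting [K] only at
   positive heights and supporting the projection of [K] in a direction [w].
   The epigraph of a steep convex ramp [max eps (A - M <w, x - xf>)] misses
   [K], and along that line [d(., K) - d(., L)] is positive at height [0],
   negative at a point of [K] and positive above [K], so it has two zeros and
   [G^- < G^+] there. *)

Lemma continuous_sum (R : realType) (T : topologicalType) (I : Type) (s : seq I)
    (F : I -> T -> R) :
  (forall i, continuous (F i)) -> continuous (fun t => \sum_(i <- s) F i t).
Proof. by move=> cF; apply: continuous_big => [|i _]; [exact: add_continuous|exact: cF]. Qed.

Lemma sqrt_addr_sqr_le (R : realType) (H a b : R) : 0 <= H ->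
  Num.sqrt (H + a ^+ 2) <= Num.sqrt (H + b ^+ 2) + `|a - b|.
Proof.
move=> H0; set s := Num.sqrt (H + b ^+ 2).
have s0 : 0 <= s := sqrtr_ge0 _.
have s2 : s ^+ 2 = H + `|b| ^+ 2 by rewrite sqr_sqrtr ?real_normK ?num_real // addr_ge0 ?sqr_ge0.
have sb : `|b| <= s by rewrite -sqrtr_sqr ler_wsqrtr // lerDr.
have ab : `|a| <= `|b| + `|a - b| by rewrite addrC; apply: le_trans (ler_normD _ _); rewrite subrK.
rewrite -[X in _ <= X]ger0_norm ?addr_ge0 // -sqrtr_sqr ler_sqrt ?sqr_ge0 //.
rewrite -real_normK ?num_real //.
have := normr_ge0 (a - b); have := normr_ge0 a; have := normr_ge0 b; nra.
Qed.

Lemma continuous_1lipschitz (R : realType) (g : R -> R) :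
  (forall u v, `|g u - g v| <= `|u - v|) -> continuous g.
Proof.
move=> H y; apply/cvgrPdist_lt => e e0.
near=> t; apply: le_lt_trans (H _ _) _.
near: t; exact: cvgr_dist_lt.
Unshelve. all: by end_near.
Qed.

Lemma segment_point_lt (R : realType) (n : nat) (f : 'rV[R]_n -> R) (x a : 'rV[R]_n) c :
  continuous f -> f a < c -> exists2 l : R, 0 < l < 1 & f (x + l *: (a - x)) < c.
Proof.
move=> cf fac; set g := fun l : R => f (x + l *: (a - x)).
have g1 : g 1 = f a by rewrite /g scale1r addrC subrK.
have cg : {for 1, continuous g}.
  apply: (continuous_comp (f := fun l : R => x + l *: (a - x))); last exact: cf.
  by apply: continuousD; [exact: cst_continuous|exact: scalel_continuous].
have /nbhs_ballP[d d0 Hd] : \forall l \near (1 : R), g l < c.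
  by apply: (cvgr_lt _ cg); rewrite g1.
have m0 : 0 < Num.min 1 d by rewrite lt_min ltr01.
have m1 : Num.min 1 d <= 1 by rewrite ge_min lexx.
have md : Num.min 1 d <= d by rewrite ge_min lexx orbT.
exists (1 - Num.min 1 d / 2); first by apply/andP; split; lra.
apply: (Hd (1 - Num.min 1 d / 2)); rewrite -ball_normE /=.
have -> : 1 - (1 - Num.min 1 d / 2) = Num.min 1 d / 2 by ring.
by rewrite ger0_norm; lra.
Qed.

Section SquaredDistance.
Variables (R : realType) (n : nat).
Local Notation P := ('rV[R]_n * R)%type.

Definition dotr (u v : 'rV[R]_n) : R := \sum_(i < n) u 0 i * v 0 i.
Definition sqdist_rV (a b : 'rV[R]_n) : R := \sum_(i < n) (a 0 i - b 0 i) ^+ 2.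
Definition sqdist (p q : P) : R := sqdist_rV p.1 q.1 + (p.2 - q.2) ^+ 2.

Lemma sqdist_pair x y q : sqdist (x, y) q = sqdist_rV x q.1 + (y - q.2) ^+ 2.
Proof. by []. Qed.

Lemma sqdist_rV_dotr a b : sqdist_rV a b = dotr (a - b) (a - b).
Proof. by apply: eq_bigr => i _; rewrite !mxE expr2. Qed.

Lemma dotrB u a b : dotr u (a - b) = dotr u a - dotr u b.
Proof. by rewrite /dotr -sumrB; apply: eq_bigr => i _; rewrite !mxE; ring. Qed.

Lemma dotrD u a b : dotr u (a + b) = dotr u a + dotr u b.
Proof. by rewrite /dotr -big_split; apply: eq_bigr => i _ /=; rewrite !mxE; ring. Qed.

Lemma dotrZ u a t : dotr u (t *: a) = t * dotr u a.
Proof. by rewrite /dotr mulr_sumr; apply: eq_bigr => i _; rewrite !mxE; ring. Qed.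

Lemma dotrr_ge0 u : 0 <= dotr u u.
Proof. by apply: sumr_ge0 => i _; rewrite -expr2 sqr_ge0. Qed.

Lemma sqdist_rV_ge0 a b : 0 <= sqdist_rV a b.
Proof. by apply: sumr_ge0 => i _; exact: sqr_ge0. Qed.

Lemma sqdist_ge0 p q : 0 <= sqdist p q.
Proof. by rewrite addr_ge0 ?sqdist_rV_ge0 ?sqr_ge0. Qed.

Lemma sqdist_rV_eq0 a b : (sqdist_rV a b == 0) = (a == b).
Proof.
rewrite psumr_eq0 => [|i _]; last exact: sqr_ge0.
apply/idP/eqP => [/allP ab|->]; last by apply/allP => i _; rewrite subrr expr0n eqxx.
by apply/rowP => i; apply/eqP; rewrite -subr_eq0 -sqrf_eq0; exact: ab (mem_index_enum _).
Qed.

Lemma sqdist_eq0 p q : (sqdist p q == 0) = (p == q).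
Proof.
rewrite paddr_eq0 ?sqdist_rV_ge0 ?sqr_ge0 // sqdist_rV_eq0 sqrf_eq0 subr_eq0.
by case: p q => [a y] [b z]; rewrite xpair_eqE.
Qed.

Lemma sqdistxx p : sqdist p p = 0.
Proof. by apply/eqP; rewrite sqdist_eq0. Qed.

Lemma sqdist_rV_shift x w t : sqdist_rV x (x + t *: w) = t ^+ 2 * dotr w w.
Proof. by rewrite /sqdist_rV mulr_sumr; apply: eq_bigr => i _; rewrite !mxE; ring. Qed.

Lemma sqdist_rV_segment x a l :
  sqdist_rV x (x + l *: (a - x)) = l ^+ 2 * sqdist_rV x a.
Proof. by rewrite /sqdist_rV mulr_sumr; apply: eq_bigr => i _; rewrite !mxE; ring. Qed.

Lemma sqdist_rV_comb x k q t :
  sqdist_rV x (t *: q + (1 - t) *: k)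
  = sqdist_rV x k - 2 * t * dotr (x - k) (q - k) + t ^+ 2 * sqdist_rV q k.
Proof.
rewrite /sqdist_rV /dotr !mulr_sumr -sumrB -big_split /=.
by apply: eq_bigr => i _ /=; rewrite !mxE; ring.
Qed.

Lemma sqdist_coord_le (p q : P) (i : 'I_n) : (p.1 0 i - q.1 0 i) ^+ 2 <= sqdist p q.
Proof.
rewrite /sqdist /sqdist_rV (bigD1 i) //= -addrA lerDl.
by rewrite addr_ge0 ?sqr_ge0 // sumr_ge0 // => j _; exact: sqr_ge0.
Qed.

Lemma sqdist_height_le (p q : P) : (p.2 - q.2) ^+ 2 <= sqdist p q.
Proof. by rewrite /sqdist lerDr sqdist_rV_ge0. Qed.

Lemma continuous_dotr w : continuous (dotr w).
Proof.
apply: (continuous_sum (F := fun i (v : 'rV[R]_n) => w 0 i * v 0 i)) => i v.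
by apply: continuousM; [exact: cst_continuous|exact: coord_continuous].
Qed.

Lemma continuous_sqdist_rV a : continuous (sqdist_rV a).
Proof.
apply: (continuous_sum (F := fun i (b : 'rV[R]_n) => (a 0 i - b 0 i) ^+ 2)) => i b.
have cB : {for b, continuous (fun b : 'rV[R]_n => a 0 i - b 0 i)}.
  by apply: continuousB; [exact: cst_continuous|exact: coord_continuous].
by under eq_fun do rewrite expr2; exact: (continuousM cB cB).
Qed.

Lemma continuous_fst_sqdist_rV a : continuous (fun q : P => sqdist_rV a q.1).
Proof.
by move=> q; apply: (continuous_comp (f := fst)); [exact: cvg_fst|exact: continuous_sqdist_rV].
Qed.

Lemma continuous_sqdist p : continuous (sqdist p).
Proof.
move=> q; apply: cvgD; first exact: continuous_fst_sqdist_rV.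
have cB : {for q, continuous (fun q : P => p.2 - q.2)}.
  by apply: continuousB; [exact: cst_continuous|exact: cvg_snd].
by under eq_fun do rewrite expr2; exact: (continuousM cB cB).
Qed.

End SquaredDistance.

Section SetDistance.
Variables (R : realType) (n : nat).
Local Notation P := ('rV[R]_n * R)%type.
Implicit Types (S : set P) (p q k : P).

Definition nearest S p k := S k /\ forall q, S q -> sqdist p k <= sqdist p q.

Lemma setdist_le S p q : S q -> setdist p S <= Num.sqrt (sqdist p q).
Proof.
move=> Sq; apply: ge_inf; last by exists q.
by exists 0 => _ [q' _ <-]; exact: sqrtr_ge0.
Qed.

Lemma lb_le_setdist S p m : S !=set0 ->
  (forall q, S q -> m <= Num.sqrt (sqdist p q)) -> m <= setdist p S.
Proof.
move=> [q Sq] H; apply: lb_le_inf; first by exists (Defs.edist p q), q.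
by move=> _ [q' Sq' <-]; exact: H.
Qed.

Lemma setdist_ge0 S p : S !=set0 -> 0 <= setdist p S.
Proof. by move=> S0; apply: lb_le_setdist => // q _; exact: sqrtr_ge0. Qed.

Lemma setdist_eq0 S p : S p -> setdist p S = 0.
Proof.
move=> Sp; apply/eqP; rewrite eq_le setdist_ge0; last by exists p.
by rewrite andbT -(sqrtr0 R) -(sqdistxx p) setdist_le.
Qed.

Lemma setdist_nearest S p k : nearest S p k -> setdist p S = Num.sqrt (sqdist p k).
Proof.
move=> [Sk H]; apply/eqP; rewrite eq_le setdist_le //=.
by apply: lb_le_setdist => [|q Sq]; [exists k | rewrite ler_sqrt ?H ?sqdist_ge0].
Qed.

Lemma nearest_of_setdist_eq S T p k : setdist p S = setdist p T -> nearest T p k ->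
  forall q, S q -> sqdist p k <= sqdist p q.
Proof.
by move=> e nk q Sq; rewrite -ler_sqrt ?sqdist_ge0 // -(setdist_nearest nk) -e setdist_le.
Qed.

Lemma nearest_compact S p : compact S -> S !=set0 -> exists k, nearest S p k.
Proof.
move=> cS S0.
have [k] := compact_EVT_min S0 cS (continuous_subspaceT (@continuous_sqdist R n p)).
by rewrite inE => Sk H; exists k; split => // q Sq; apply: H; rewrite inE.
Qed.

(* The points of [S] at least as close to [p] as [q0] lie in a compact box. *)
Lemma nearest_closed S p : closed S -> S !=set0 -> exists k, nearest S p k.
Proof.
move=> clS [q0 Sq0]; set c := sqdist p q0 + 1.
set B := [set v : 'rV[R]_n | forall i, `[p.1 0 i - c, p.1 0 i + c]%classic (v ord0 i)]
   `*` `[p.2 - c, p.2 + c]%classic.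
have cB : compact B.
  apply: compact_setX; last exact: segment_compact.
  exact: (@rV_compact R n (fun i => `[p.1 0 i - c, p.1 0 i + c]%classic)
    (fun i => @segment_compact R _ _)).
have abs_le_sq (t : R) : t ^+ 2 <= sqdist p q0 -> `|t| <= c.
  move=> h; have := normr_ge0 t; rewrite -(real_normK (num_real t)) /c in h *; nra.
have inB q : sqdist p q <= sqdist p q0 -> B q.
  move=> hq; split => [i|] /=; rewrite in_itv /= -ler_distlC abs_le_sq //.
    by apply: le_trans hq; exact: sqdist_coord_le.
  by apply: le_trans hq; exact: sqdist_height_le.
have [k Bk [[_ Sk] H]] : exists2 k, B k & nearest (B `&` S) p k.
  have [k [[Bk Sk] H]] := nearest_compact p (compact_closedI cB clS)
    (ex_intro _ q0 (conj (inB _ (lexx _)) Sq0)).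
  by exists k => //; split.
exists k; split => // q Sq; have [hq|hq] := leP (sqdist p q) (sqdist p q0).
  by apply: H; split => //; exact: inB.
by apply: le_trans (ltW hq); apply: H; split => //; exact: inB.
Qed.

Lemma setdist_gt0 S p k : nearest S p k -> ~ S p -> 0 < setdist p S.
Proof.
move=> nk Sp; rewrite (setdist_nearest nk) sqrtr_gt0 lt_def sqdist_ge0 sqdist_eq0 andbT.
by apply/eqP => pk; apply: Sp; rewrite pk; case: nk.
Qed.

End SetDistance.

Section VerticalLine.
Variables (R : realType) (n : nat).
Local Notation P := ('rV[R]_n * R)%type.
Implicit Types (S K L : set P) (x : 'rV[R]_n).

Lemma setdist_vertical_le S x y y' : S !=set0 ->
  setdist (x, y) S <= setdist (x, y') S + `|y - y'|.
Proof.
move=> S0; rewrite -lerBlDr; apply: lb_le_setdist => // q Sq.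
rewrite lerBlDr; apply: le_trans (setdist_le _ Sq) _; rewrite !sqdist_pair.
have -> : y - y' = (y - q.2) - (y' - q.2) by ring.
exact/sqrt_addr_sqr_le/sqdist_rV_ge0.
Qed.

Lemma continuous_setdist_vertical S x : S !=set0 ->
  continuous (fun y => setdist (x, y) S).
Proof.
move=> S0; apply: continuous_1lipschitz => u v; rewrite ler_norml.
have := setdist_vertical_le x u v S0; have := setdist_vertical_le x v u S0.
by rewrite distrC => h1 h2; apply/andP; split; lra.
Qed.

Lemma epigraph_closed (f : 'rV[R]_n -> R) : continuous f -> closed (epigraph f).
Proof.
move=> cf; have -> : epigraph f = (fun q : P => q.2 - f q.1) @^-1` [set z | 0 <= z].
  by apply/seteqP; split => q /=; rewrite /epigraph /= subr_ge0.
apply: (proj1 (continuous_closedP _)); last exact: closed_ge.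
move=> q; apply: continuousB; first exact: cvg_snd.
by apply: (continuous_comp (f := fst)); [exact: cvg_fst|exact: cf].
Qed.

Lemma epigraph_n0 (f : 'rV[R]_n -> R) : epigraph f !=set0.
Proof. by exists (0, f 0); rewrite /epigraph /=. Qed.

Lemma Gminus_eq_Gplus K L x :
  (forall y1 y2, equiset K L x y1 -> equiset K L x y2 -> y1 = y2) ->
  Gminus K L x = Gplus K L x.
Proof.
move=> uniq; rewrite /Gminus /Gplus.
have [[a Ea]|E0] := pselect (exists a, equiset K L x a).
  have -> : equiset K L x = [set a].
    by apply/seteqP; split => [y Ey|y ->] //=; exact: uniq.
  by rewrite sup1 inf1.
have -> : equiset K L x = set0 by apply/seteqP; split => y // Ey; apply: E0; exists y.
by rewrite sup0 inf0.
Qed.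

(* [y0] is nonnegative because [inf] of a set without lower bound is [0]. *)
Lemma Gminus_lt_Gplus K L x y0 y1 y2 : K !=set0 -> L !=set0 ->
  0 <= y0 -> y0 <= y1 -> y1 <= y2 ->
  let h y := setdist (x, y) K - setdist (x, y) L in
  0 < h y0 -> h y1 < 0 -> (forall y, y2 <= y -> 0 < h y) ->
  Gminus K L x < Gplus K L x.
Proof.
move=> K0 L0 y00 y01 y12 h hy0 hy1 hge.
have ch : continuous h.
  by move=> y; apply: cvgB; exact: continuous_setdist_vertical.
have hy2 := hge y2 (lexx y2).
have [ya ya01 hya] : exists2 ya, ya \in `[y0, y1] & h ya = 0.
  apply: IVT => //; first exact: continuous_subspaceT.
  by rewrite /Num.min /Num.max; case: ltP => ?; apply/andP; split; lra.
have [yb yb12 hyb] : exists2 yb, yb \in `[y1, y2] & h yb = 0.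
  apply: IVT => //; first exact: continuous_subspaceT.
  by rewrite /Num.min /Num.max; case: ltP => ?; apply/andP; split; lra.
move: ya01 yb12; rewrite !in_itv /= => /andP[y0a ay1] /andP[y1b by2].
have ab : ya < yb.
  apply: lt_le_trans y1b; rewrite lt_neqAle ay1 andbT.
  by apply: contraTneq hy1 => <-; rewrite hya ltxx.
set E := equiset K L x.
have EE y : h y = 0 -> E y by move/eqP; rewrite subr_eq0 => /eqP.
have ubE : ubound E y2.
  move=> y Ey; rewrite leNgt; apply/negP => lty.
  by have := hge y (ltW lty); rewrite /h Ey subrr ltxx.
have supb : yb <= sup E := ub_le_sup (ex_intro _ y2 ubE) (EE _ hyb).
have infa : inf E <= ya.
  have [lbE|nlbE] := pselect (has_lbound E); first exact: ge_inf (EE _ hya).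
  by rewrite inf_out; [lra|case].
by rewrite /Gminus /Gplus -/E; lra.
Qed.

End VerticalLine.

Section Uniqueness.
Variables (R : realType) (n : nat).
Local Notation P := ('rV[R]_n * R)%type.

Lemma nearest_epigraph_height (f : 'rV[R]_n -> R) x y a b :
  nearest (epigraph f) (x, y) (a, b) -> y <= b.
Proof.
move=> [fab near]; rewrite leNgt; apply/negP => lt_by.
have Lay : epigraph f (a, y) by rewrite /epigraph /= in fab *; lra.
have := near _ Lay; rewrite !sqdist_pair /= subrr expr0n /= addr0.
have : 0 < (y - b) ^+ 2 by rewrite exprn_gt0 // subr_gt0.
lra.
Qed.

Variable K : set P.
Hypothesis K_down : forall k s, K k -> 0 < s -> s <= k.2 -> K (k.1, s).

Lemma nearest_height_le x y kx z : nearest K (x, y) (kx, z) -> 0 < z -> z <= y.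
Proof.
move=> [Kk near] z0; rewrite leNgt; apply/negP => yz.
set s := Num.max y (z / 2).
have ys : y <= s by rewrite le_max lexx.
have sz : s < z by rewrite gt_max yz /=; lra.
have s0 : 0 < s by rewrite lt_max; apply/orP; right; lra.
have := near (kx, s) (K_down Kk s0 (ltW sz)); rewrite !sqdist_pair /= lerD2l.
have : (s - y) ^+ 2 < (z - y) ^+ 2 by nra.
by rewrite -(sqrrN (y - s)) -(sqrrN (y - z)) !opprB; lra.
Qed.

Hypotheses (cK : compact K) (K0 : K !=set0).
Variable f : 'rV[R]_n -> R.
Hypotheses (f_gt0 : forall x, 0 < f x) (cf : continuous f).
Hypothesis disj : K `&` epigraph f = set0.

Lemma epigraph_strictly_closer x a c : f a < c -> 0 < sqdist_rV x a ->
  exists2 a', epigraph f (a', c) & sqdist_rV x a' < sqdist_rV x a.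
Proof.
move=> fac Ha; have [l /andP[l0 l1] fl] := segment_point_lt x cf fac.
exists (x + l *: (a - x)); first exact: ltW.
rewrite sqdist_rV_segment; have : l ^+ 2 < 1 by nra.
nra.
Qed.

Section EquidistantPair.
Variables (x kx a : 'rV[R]_n) (y1 y2 z b : R).
Hypothesis y12 : y1 < y2.
Hypotheses (nearK : nearest K (x, y2) (kx, z)) (nearL : nearest (epigraph f) (x, y1) (a, b)).
Hypothesis e1 : setdist (x, y1) K = setdist (x, y1) (epigraph f).
Hypothesis e2 : setdist (x, y2) K = setdist (x, y2) (epigraph f).

Let Kk : K (kx, z). Proof. exact: nearK.1. Qed.
Let La : epigraph f (a, b). Proof. exact: nearL.1. Qed.

Let farK q : K q -> sqdist (x, y1) (a, b) <= sqdist (x, y1) q.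
Proof. exact: nearest_of_setdist_eq e1 nearL q. Qed.

Let farL q : epigraph f q -> sqdist (x, y2) (kx, z) <= sqdist (x, y2) q.
Proof. exact: nearest_of_setdist_eq (esym e2) nearK q. Qed.

Let y1_le_b : y1 <= b. Proof. exact: nearest_epigraph_height nearL. Qed.
Let b_gt0 : 0 < b. Proof. exact: lt_le_trans (f_gt0 a) La. Qed.

(* Adding the nearest-point inequalities for [(kx, z)] and [(a, b)]. *)
Let b_le_z : b <= z.
Proof.
rewrite leNgt; apply/negP => zb.
have := farK Kk; have := farL La; rewrite !sqdist_pair /=.
have : 0 < (y2 - y1) * (b - z) by rewrite mulr_gt0 // subr_gt0.
nra.
Qed.

Let z_le_y2 : z <= y2.
Proof. exact: nearest_height_le nearK (lt_le_trans b_gt0 b_le_z). Qed.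

Let horizontal_le : sqdist_rV x kx + (y2 - z) ^+ 2 <= sqdist_rV x a.
Proof.
have Lay2 : epigraph f (a, y2).
  by move: (La) (b_le_z) (z_le_y2); rewrite /epigraph /=; lra.
by have := farL Lay2; rewrite !sqdist_pair /= subrr expr0n /= addr0.
Qed.

(* Lower [(kx, z)] to height [max y1 (b / 2)]. *)
Lemma equidistant_pair_strict_False : (y1 < b) || (z < y2) -> False.
Proof.
move=> strict; move: (y1_le_b) (b_gt0) (b_le_z) => y1b b0 bz.
set s := Num.max y1 (b / 2).
have s0 : 0 < s by rewrite lt_max; apply/orP; right; lra.
have sz : s <= z by rewrite ge_max; apply/andP; split; lra.
have y1s : y1 <= s by rewrite le_max lexx.
have sb : s <= b by rewrite ge_max; apply/andP; split; lra.
have := farK (K_down Kk s0 sz); have := horizontal_le; rewrite !sqdist_pair /=.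
have : (s - y1) ^+ 2 <= (b - y1) ^+ 2 by nra.
case/orP: strict => [lt_y1b|lt_zy2].
  have : s < b by rewrite /s gt_max lt_y1b /=; lra.
  have := sqr_ge0 (y2 - z); nra.
have : 0 < (y2 - z) ^+ 2 by rewrite exprn_gt0 // subr_gt0.
lra.
Qed.

(* Move [(a, y2)] horizontally towards [x]. *)
Lemma equidistant_pair_level_False : b <= y1 -> y2 <= z -> False.
Proof.
move=> by1 y2z; move: (y12) (b_gt0) => lt12 b0.
have eb : b = y1 by apply/eqP; rewrite eq_le by1.
have ez : z = y2 by apply/eqP; rewrite eq_le z_le_y2.
have Kky1 : K (kx, y1) by apply: (K_down Kk); rewrite /= ?ez; lra.
have := farK Kky1; have := horizontal_le.
rewrite !sqdist_pair /= eb ez subrr expr0n /= !addr0 => Hk_le Ha_le.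
have [Ha0|Ha_gt0] := eqVneq (sqdist_rV x a) 0.
  have Hk0 : sqdist_rV x kx = 0 by apply: le_anti; rewrite sqdist_rV_ge0 andbT -Ha0.
  have xa : x = a by apply/eqP; rewrite -sqdist_rV_eq0 Ha0.
  have xk : x = kx by apply/eqP; rewrite -sqdist_rV_eq0 Hk0.
  have : (K `&` epigraph f) (x, y1) by split; [rewrite xk | rewrite xa -eb].
  by rewrite disj.
have fay2 : f a < y2 by have := La; rewrite /epigraph /= => fab; lra.
have Ha_pos : 0 < sqdist_rV x a by rewrite lt_def Ha_gt0 sqdist_rV_ge0.
have [a' La' closer] := epigraph_strictly_closer fay2 Ha_pos.
by have := farL La'; rewrite !sqdist_pair /= ez subrr expr0n /= addr0; lra.
Qed.

End EquidistantPair.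

Lemma equiset_lt_False x y1 y2 : y1 < y2 ->
  equiset K (epigraph f) x y1 -> equiset K (epigraph f) x y2 -> False.
Proof.
rewrite /equiset /= => y12 e1 e2.
have [[kx z] nearK] := nearest_compact (x, y2) cK K0.
have [[a b] nearL] := nearest_closed (x, y1) (epigraph_closed cf) (epigraph_n0 f).
have [strict|] := boolP ((y1 < b) || (z < y2)).
  exact: equidistant_pair_strict_False y12 nearK nearL e1 e2 strict.
rewrite negb_or -!leNgt => /andP[by1 y2z].
exact: equidistant_pair_level_False y12 nearK nearL e1 e2 by1 y2z.
Qed.

Lemma epigraph_Gminus_eq_Gplus x : Gminus K (epigraph f) x = Gplus K (epigraph f) x.
Proof.
apply: Gminus_eq_Gplus => y1 y2 e1 e2.
by case: (ltgtP y1 y2) => // [lt12|lt21]; exfalso;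
  [exact: equiset_lt_False lt12 e1 e2 | exact: equiset_lt_False lt21 e2 e1].
Qed.

End Uniqueness.

Section ConvexContinuity.
Variables (R : realType) (n : nat) (f : 'rV[R]_n -> R).
Hypothesis f_convex : convex_fun_rV f.

Lemma convex_le_max_ends x0 v c t : 0 < c -> `|t| <= c ->
  f (x0 + t *: v) <= Num.max (f (x0 - c *: v)) (f (x0 + c *: v)).
Proof.
move=> c0; rewrite ler_norml => /andP[t1 t2].
set l := (c - t) / (2 * c).
have l0 : 0 <= l by rewrite divr_ge0 //; lra.
have l1 : l <= 1 by rewrite ler_pdivrMr ?mulr_gt0 //; lra.
have -> : x0 + t *: v = l *: (x0 - c *: v) + (1 - l) *: (x0 + c *: v).
  by apply/rowP => i; rewrite !mxE /l; field; lra.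
apply: le_trans (f_convex _ _ (introT andP (conj l0 l1))) _.
have : f (x0 - c *: v) <= Num.max (f (x0 - c *: v)) (f (x0 + c *: v)).
  by rewrite le_max lexx.
have : f (x0 + c *: v) <= Num.max (f (x0 - c *: v)) (f (x0 + c *: v)).
  by rewrite le_max lexx orbT.
have : 0 <= 1 - l by lra.
nra.
Qed.

Lemma convex_midpoint a b : f (2^-1 *: a + 2^-1 *: b) <= 2^-1 * f a + 2^-1 * f b.
Proof.
have half01 : (0 <= (2^-1 : R)) && ((2^-1 : R) <= 1) by apply/andP; split; lra.
by have := f_convex a b half01; have -> : (1 : R) - 2^-1 = 2^-1 by field.
Qed.

(* Induction on the number [k] of coordinates allowed to vary: a vector
   supported on the first [k.+1] coordinates is the midpoint of one supported
   on the first [k] and a multiple of the [k]-th basis vector. *)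
Lemma convex_bounded_box_prefix x0 k d : 0 < d -> exists M,
  forall h : 'rV[R]_n, (forall i : 'I_n, (k <= i)%N -> h 0 i = 0) ->
    (forall i, `|h 0 i| <= d) -> f (x0 + h) <= M.
Proof.
elim: k d => [|k IH] d d0.
  exists (f x0) => h hz _.
  suff -> : h = 0 by rewrite addr0.
  by apply/rowP => i; rewrite mxE hz.
have [kn|kn] := leqP n k.
  have [M HM] := IH d d0; exists M => h hz hb; apply: HM => // i ki.
  by have := ltn_ord i; rewrite ltnNge (leq_trans kn ki).
set j : 'I_n := Ordinal kn; set e := (delta_mx 0 j : 'rV[R]_n).
have [M1 HM1] := IH (2 * d) (mulr_gt0 (ltr0n _ 2) d0).
set M2 := Num.max (f (x0 - (2 * d) *: e)) (f (x0 + (2 * d) *: e)).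
exists (2^-1 * M1 + 2^-1 * M2) => h hz hb.
set h' := h - h 0 j *: e.
have h'E i : h' 0 i = if i == j then 0 else h 0 i.
  by rewrite !mxE eqxx /=; case: eqP => [->|]; rewrite ?mulr1 ?subrr // mulr0 subr0.
have -> : x0 + h = 2^-1 *: (x0 + 2 *: h') + 2^-1 *: (x0 + (2 * h 0 j) *: e).
  by apply/rowP => i; rewrite /h' !mxE; field.
apply: le_trans (convex_midpoint _ _) _.
have b1 : f (x0 + 2 *: h') <= M1.
  apply: HM1 => [i ki|i]; rewrite mxE h'E; case: eqP => [_|ij].
  - by rewrite mulr0.
  - rewrite hz ?mulr0 // ltn_neqAle ki andbT.
    by apply: contra_not_neq ij => e1; apply: val_inj; rewrite /= e1.
  - by rewrite mulr0 normr0 ltW // mulr_gt0.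
  - by rewrite normrM ger0_norm // ler_pM2l.
have b2 : f (x0 + (2 * h 0 j) *: e) <= M2.
  by apply: convex_le_max_ends; rewrite ?mulr_gt0 // normrM ger0_norm // ler_pM2l.
lra.
Qed.

Lemma convex_bounded_box x0 d : 0 < d -> exists M,
  forall h : 'rV[R]_n, (forall i, `|h 0 i| <= d) -> f (x0 + h) <= M.
Proof.
move=> d0; have [M HM] := convex_bounded_box_prefix x0 n d0.
by exists M => h hb; apply: HM => // i; rewrite leqNgt ltn_ord.
Qed.

(* [y] lies on the segment from [x0] to [x0 + h], and [x0] on the segment from
   [y] to [x0 - h], where [h := (y - x0) / t] stays in the unit box. *)
Lemma convex_local_bound x0 M t (y : 'rV[R]_n) :
  (forall h : 'rV[R]_n, (forall i, `|h 0 i| <= 1) -> f (x0 + h) <= M) ->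
  0 < t <= 1 -> (forall i, `|y 0 i - x0 0 i| <= t) ->
  `|f y - f x0| <= t * (M - f x0).
Proof.
move=> HM /andP[t0 t1] hy; set h := t^-1 *: (y - x0).
have hb i : `|h 0 i| <= 1.
  rewrite !mxE normrM ger0_norm; last by rewrite invr_ge0 ltW.
  by rewrite mulrC ler_pdivrMr // mul1r.
have hNb i : `|(- h) 0 i| <= 1 by rewrite mxE normrN.
set s := (1 + t)^-1.
have s01 : 0 <= s <= 1 by rewrite invr_ge0 invf_le1; lra.
have t01 : 0 <= t <= 1 by lra.
have up : f y <= t * M + (1 - t) * f x0.
  have -> : y = t *: (x0 + h) + (1 - t) *: x0.
    by apply/rowP => i; rewrite /h !mxE; field; rewrite gt_eqF.
  have := f_convex (x0 + h) x0 t01.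
  by have := HM h hb; have := t0; nra.
have lo : (1 + t) * f x0 <= f y + t * M.
  have E : (1 + t) * (s * f y + (1 - s) * M) = f y + t * M.
    by rewrite /s; field; rewrite gt_eqF //; lra.
  rewrite -E; apply: ler_wpM2l; first lra.
  have -> : x0 = s *: y + (1 - s) *: (x0 + - h).
    by apply/rowP => i; rewrite /s /h !mxE; field; rewrite ?gt_eqF //; lra.
  have := f_convex y (x0 + - h) s01.
  have : 0 <= 1 - s by lra.
  by have := HM _ hNb; nra.
by rewrite ler_norml; apply/andP; split; nra.
Qed.

Lemma convex_continuous : continuous f.
Proof.
move=> x0; apply/(@cvgrPdist_lt _ _ _ (nbhs x0)) => e e0.
have [M HM] := convex_bounded_box x0 ltr01.
have Mf : f x0 <= M by have := HM 0; rewrite addr0; apply => i; rewrite mxE normr0.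
set t := Num.min 1 (e / (2 * (M - f x0 + 1))).
have et : 0 < e / (2 * (M - f x0 + 1)) by rewrite divr_gt0 // mulr_gt0 //; lra.
have t01 : 0 < t <= 1 by rewrite lt_min ltr01 et ge_min lexx.
have tM : t * (M - f x0) < e.
  have : t <= e / (2 * (M - f x0 + 1)) by rewrite ge_min lexx orbT.
  rewrite ler_pdivlMr ?mulr_gt0 //; lra.
near=> y; rewrite distrC; apply: le_lt_trans tM.
apply: convex_local_bound => //; near: y.
apply/nbhs_ballP; exists t; first by case/andP: t01.
by move=> y [_ yt] i; have := yt 0 i; rewrite /ball /= distrC => /ltW.
Unshelve. all: by end_near.
Qed.

End ConvexContinuity.

Section SupportingLine.
Variables (R : realType) (n : nat).
Local Notation P := ('rV[R]_n * R)%type.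

Lemma continuous_fst_dotr (w : 'rV[R]_n) : continuous (fun q : P => dotr w q.1).
Proof.
by move=> q; apply: (continuous_comp (f := fst)); [exact: cvg_fst|exact: continuous_dotr].
Qed.

Lemma dotr_horizontal_nearest_le0 (S : set P) x k : convex_set_pt S -> S k ->
  (forall q, S q -> sqdist_rV x k.1 <= sqdist_rV x q.1) ->
  forall q, S q -> dotr (x - k.1) (q.1 - k.1) <= 0.
Proof.
move=> cvxS Sk k_min q Sq; rewrite leNgt; apply/negP => c0.
set c := dotr (x - k.1) (q.1 - k.1); set V := sqdist_rV q.1 k.1.
have V0 : 0 <= V := sqdist_rV_ge0 _ _.
set t := Num.min 1 (c / (V + 1)).
have t0 : 0 < t by rewrite /t lt_min ltr01 divr_gt0 //; lra.
have t01 : 0 <= t <= 1 by rewrite ltW //= /t ge_min lexx.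
have tV : t * (V + 1) <= c by rewrite -ler_pdivlMr ?/t ?ge_min ?lexx ?orbT //; lra.
have := k_min _ (cvxS _ _ Sq Sk t t01); rewrite /= sqdist_rV_comb -/c -/V.
nra.
Qed.

Lemma closed_height_le0 : closed [set q : P | q.2 <= 0].
Proof.
rewrite (_ : [set q : P | q.2 <= 0] = snd @^-1` [set z : R | z <= 0]) //.
by apply: (proj1 (continuous_closedP _)); [move=> q; exact: cvg_snd|exact: closed_le].
Qed.

(* Project [x0] horizontally onto the part of [K] below height [0], at [km];
   the vertical line through a point of [K] maximal in the direction
   [w := x0 - km.1] then meets [K] only at positive heights. *)
Lemma supporting_vertical_line (K : set P) xs ys x0 y1 y2 :
  compact K -> convex_set_pt K -> K (xs, ys) -> ys <= 0 ->
  0 < y1 -> y1 < y2 -> ~ K (x0, y1) -> K (x0, y2) ->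
  exists w xf zf, [/\ 0 < dotr w w, K (xf, zf),
    forall q, K q -> dotr w q.1 <= dotr w xf &
    forall q, K q -> q.1 = xf -> 0 < q.2].
Proof.
move=> cK cvxK Ks ys0 y10 y12 nK1 K2.
set Kl := K `&` [set q : P | q.2 <= 0].
have [km] : exists2 km, Kl km & forall q, Kl q -> sqdist_rV x0 km.1 <= sqdist_rV x0 q.1.
  have [km] := compact_EVT_min (ex_intro _ (xs, ys) (conj Ks ys0))
    (compact_closedI cK closed_height_le0)
    (continuous_subspaceT (continuous_fst_sqdist_rV (a := x0))).
  by rewrite inE => Klm km_min; exists km => // q Klq; apply: km_min; rewrite inE.
move=> [Kkm /= km0] km_min; set w := x0 - km.1.
have cvxKl : convex_set_pt Kl.
  move=> p q [Kp /= p0] [Kq /= q0] t t01; split; first exact: cvxK.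
  by case/andP: t01 => t0 t1 /=; nra.
have w_gt0 : 0 < dotr w w.
  rewrite -sqdist_rV_dotr lt_def sqdist_rV_ge0 sqdist_rV_eq0 andbT.
  apply/eqP => e; apply: nK1.
  set t := (y2 - y1) / (y2 - km.2).
  have d0 : 0 < y2 - km.2 by lra.
  have t01 : 0 <= t <= 1.
    by rewrite /t divr_ge0 ?ler_pdivrMr ?mul1r //=; lra.
  have := cvxK _ _ Kkm K2 t t01; rewrite /= -e -scalerDl subrKC scale1r.
  by have -> : t * km.2 + (1 - t) * y2 = y1 by rewrite /t; field; lra.
have [kf] := compact_EVT_max (ex_intro _ _ Ks) cK
  (continuous_subspaceT (continuous_fst_dotr (w := w))).
rewrite inE => Kkf kf_max.
have {}kf_max q : K q -> dotr w q.1 <= dotr w kf.1 by move=> Kq; apply: kf_max; rewrite inE.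
exists w, kf.1, kf.2; split => //; first by case: kf Kkf {kf_max}.
move=> q Kq qkf; rewrite ltNge; apply/negP => q0.
have := dotr_horizontal_nearest_le0 cvxKl (conj Kkm km0) km_min (conj Kq q0).
rewrite dotrB qkf -/w; have := kf_max _ K2.
have : dotr w w = dotr w x0 - dotr w km.1 by rewrite -dotrB.
lra.
Qed.

End SupportingLine.

Section Ramp.
Variables (R : realType) (n : nat).

Definition ramp (e A M : R) (w c x : 'rV[R]_n) : R := Num.max e (A - M * dotr w (x - c)).

Lemma continuous_ramp e A M w c : continuous (ramp e A M w c).
Proof.
move=> x; have c1 := continuousB (@continuous_dotr R n w x)
  (cst_continuous (x := dotr w c) (x0 := x)).
have c2 := continuousB (cst_continuous (x := A) (x0 := x))
  (continuousM (cst_continuous (x := M) (x0 := x)) c1).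
have -> : ramp e A M w c = cst e \max (cst A - cst M \* (dotr w - cst (dotr w c))).
  by apply/funext => y; rewrite /ramp dotrB.
exact: continuous_max (cst_continuous (x := e) (x0 := x)) c2.
Qed.

Lemma convex_ramp e A M w c : 0 <= M -> convex_fun_rV (ramp e A M w c).
Proof.
move=> M0 a b t /andP[t0 t1]; rewrite /ramp.
have -> : t *: a + (1 - t) *: b - c = t *: (a - c) + (1 - t) *: (b - c).
  by apply/rowP => i; rewrite !mxE; ring.
have -> : dotr w (t *: (a - c) + (1 - t) *: (b - c))
          = t * dotr w (a - c) + (1 - t) * dotr w (b - c) by rewrite [X in X = _]dotrD !dotrZ.
rewrite ge_max.
set u := dotr w (a - c); set v := dotr w (b - c).
have mu1 : e <= Num.max e (A - M * u) by rewrite le_max lexx.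
have mu2 : A - M * u <= Num.max e (A - M * u) by rewrite le_max lexx orbT.
have mv1 : e <= Num.max e (A - M * v) by rewrite le_max lexx.
have mv2 : A - M * v <= Num.max e (A - M * v) by rewrite le_max lexx orbT.
have t1' : 0 <= 1 - t by lra.
by apply/andP; split; nra.
Qed.

Lemma ramp_gt0 e A M w c x : 0 < e -> 0 < ramp e A M w c x.
Proof. by move=> e0; apply: lt_le_trans e0 _; rewrite le_max lexx. Qed.

Lemma ramp_center e A M w c : e <= A -> ramp e A M w c c = A.
Proof. by move=> eA; rewrite /ramp dotrB subrr mulr0 subr0; apply/max_idPr. Qed.

End Ramp.

(* With [W = dotr w w], [ramp eps A M w c] is [eps] at [c + tau *: w], and
   [(c + tau *: w, eps)] is closer than [sqrt D] to [(c, 0)]. *)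
Lemma exists_ramp_parameters (R : realType) (W D A : R) :
  0 < W -> 0 < D -> 1 <= A -> exists eps tau M,
  [/\ 0 < eps, eps <= A, 0 <= M, M * (tau * W) = A & tau ^+ 2 * W + eps ^+ 2 < D].
Proof.
move=> W0 D0 A1; set eps := Num.min 1 (D / 4); set tau := Num.min 1 (D / (2 * W)).
have eps0 : 0 < eps by rewrite lt_min ltr01 divr_gt0.
have tau0 : 0 < tau by rewrite lt_min ltr01 divr_gt0 ?mulr_gt0.
have eps_le : eps <= 1 /\ eps <= D / 4 by split; rewrite ge_min lexx ?orbT.
have tau_le : tau <= 1 /\ tau * W <= D / 2.
  split; first by rewrite ge_min lexx.
  have : tau <= D / (2 * W) by rewrite ge_min lexx orbT.
  by rewrite ler_pdivlMr ?mulr_gt0 //; lra.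
exists eps, tau, (A / (tau * W)); split => //; first lra.
- by rewrite divr_ge0 ?ltW ?mulr_gt0 //; lra.
- by rewrite divfK // gt_eqF // mulr_gt0.
- by case: eps_le tau_le => e1 e2 [t1 t2]; nra.
Qed.

Section RampCounterexample.
Variables (R : realType) (n : nat).
Local Notation P := ('rV[R]_n * R)%type.
Variables (K : set P) (w xf : 'rV[R]_n) (zf : R).
Hypotheses (cK : compact K) (Kf : K (xf, zf)).
Hypothesis w_max : forall q, K q -> dotr w q.1 <= dotr w xf.
Hypothesis xf_pos : forall q, K q -> q.1 = xf -> 0 < q.2.
Variables (eps tau M A : R).
Hypotheses (eps_gt0 : 0 < eps) (eps_le : eps <= A) (M_ge0 : 0 <= M).
Hypothesis A_max : forall q, K q -> q.2 < A.
Hypothesis ramp_zero : M * (tau * dotr w w) = A.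
Hypothesis ramp_near : tau ^+ 2 * dotr w w + eps ^+ 2 < setdist (xf, 0) K ^+ 2.
Local Notation f := (ramp eps A M w xf).

Lemma ramp_epigraph_disjoint : K `&` epigraph f = set0.
Proof.
apply/seteqP; split => // q [Kq fq]; have {}fq : f q.1 <= q.2 := fq.
have : M * dotr w (q.1 - xf) <= 0 by rewrite mulr_ge0_le0 // dotrB subr_le0 w_max.
have : A - M * dotr w (q.1 - xf) <= f q.1 by rewrite le_max lexx orbT.
by have := A_max Kq; lra.
Qed.

Lemma ramp_Gminus_lt_Gplus : Gminus K (epigraph f) xf < Gplus K (epigraph f) xf.
Proof.
have zf0 : 0 < zf := xf_pos Kf erefl.
have K0 : K !=set0 by exists (xf, zf).
have L0 := epigraph_n0 f.
have clL : closed (epigraph f) := epigraph_closed (@continuous_ramp R n eps A M w xf).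
have Lw : epigraph f (xf + tau *: w, eps).
  rewrite /epigraph /= /ramp (_ : xf + tau *: w - xf = tau *: w); last first.
    by rewrite addrAC subrr add0r.
  by rewrite dotrZ ramp_zero subrr ge_max lexx (ltW eps_gt0).
apply: (Gminus_lt_Gplus K0 L0 (lexx 0) (ltW zf0) (ltW (A_max Kf))).
- rewrite subr_gt0; apply: le_lt_trans (setdist_le _ Lw) _.
  have dK : setdist (xf, 0) K = Num.sqrt (setdist (xf, 0) K ^+ 2).
    by rewrite sqrtr_sqr ger0_norm // setdist_ge0.
  have W0 := dotrr_ge0 w.
  rewrite sqdist_pair sqdist_rV_shift /= sub0r sqrrN [X in _ < X]dK ltr_sqrt //.
  by have := mulr_ge0 (sqr_ge0 tau) W0; have := sqr_ge0 eps; have := ramp_near; lra.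
- rewrite (setdist_eq0 Kf) sub0r oppr_lt0.
  have [k nk] := nearest_closed (xf, zf) clL L0.
  apply: (setdist_gt0 nk) => Lf.
  by have : (K `&` epigraph f) (xf, zf) by []; rewrite ramp_epigraph_disjoint.
- move=> y Ay; rewrite (@setdist_eq0 _ _ (epigraph f)) ?subr0; last first.
    by rewrite /epigraph /= ramp_center.
  have [k nk] := nearest_compact (xf, y) cK K0.
  by apply: (setdist_gt0 nk) => /A_max /=; lra.
Qed.

End RampCounterexample.

Section Equivalence.
Variables (R : realType) (n : nat).
Local Notation P := ('rV[R]_n * R)%type.
Variable K : set P.

Definition vertical_gap := exists x0 y1 y2, [/\ 0 < y1, y1 < y2, ~ K (x0, y1) & K (x0, y2)].

Lemma no_vertical_gap_down : ~ vertical_gap ->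
  forall k s, K k -> 0 < s -> s <= k.2 -> K (k.1, s).
Proof.
move=> nogap [kx z] s Kk s0 /= sz; apply: contrapT => nKs; apply: nogap.
exists kx, s, z; split => //; rewrite lt_neqAle sz andbT.
by apply/eqP => e; apply: nKs; rewrite e.
Qed.

Hypotheses (cK : compact K) (cvxK : convex_set_pt K) (K_low : exists p, K p /\ p.2 <= 0).

Lemma vertical_gap_counterexample : vertical_gap -> exists f : 'rV[R]_n -> R,
  [/\ forall x, 0 < f x, continuous f, convex_fun_rV f, K `&` epigraph f = set0 &
      exists x, Gminus K (epigraph f) x < Gplus K (epigraph f) x].
Proof.
have [[xs ys] [Ks ys0]] := K_low; move=> [x0 [y1 [y2 [y10 y12 nK1 K2]]]].
have [w [xf [zf [w_gt0 Kf w_max xf_pos]]]] :=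
  supporting_vertical_line cK cvxK Ks ys0 y10 y12 nK1 K2.
have [kY KkY kY_max] : exists2 kY, K kY & forall q, K q -> q.2 <= kY.2.
  have csnd : continuous (snd : P -> R) by move=> q; exact: cvg_snd.
  have [kY] := compact_EVT_max (ex_intro _ _ Kf) cK (continuous_subspaceT csnd).
  by rewrite inE => KkY kY_max; exists kY => // q Kq; apply: kY_max; rewrite inE.
have zf0 : 0 < zf := xf_pos _ Kf erefl.
have A1 : 1 <= kY.2 + 1 by have := kY_max _ Kf; rewrite /=; lra.
have A_max q : K q -> q.2 < kY.2 + 1 by move=> /kY_max; lra.
have d_gt0 : 0 < setdist (xf, 0) K.
  have [k nk] := nearest_compact (xf, 0) cK (ex_intro _ _ Kf).
  by apply: (setdist_gt0 nk) => /xf_pos /(_ erefl); rewrite ltxx.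
have [eps [tau [M [eps0 epsA M0 ramp_zero ramp_near]]]] :=
  exists_ramp_parameters w_gt0 (exprn_gt0 2 d_gt0) A1.
exists (ramp eps (kY.2 + 1) M w xf); split.
- by move=> x; exact: ramp_gt0.
- exact: continuous_ramp.
- exact: convex_ramp.
- exact: ramp_epigraph_disjoint.
- exists xf.
  exact: (ramp_Gminus_lt_Gplus cK Kf w_max xf_pos eps0 epsA M0 A_max ramp_zero ramp_near).
Qed.

End Equivalence.

Theorem corollary8 (R : realType) (n : nat) (hn : (1 <= n)%N)
  (K : set ('rV[R]_n * R)%type)
  (hKconv : convex_set_pt K) (hKcomp : compact K)
  (hKpt : exists p, K p /\ p.2 <= 0) :
  let A := forall f : 'rV[R]_n -> R, (forall x, 0 < f x) -> continuous f ->
             K `&` epigraph f = set0 ->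
             forall x, Gminus K (epigraph f) x = Gplus K (epigraph f) x in
  let B := forall f : 'rV[R]_n -> R, (forall x, 0 < f x) -> convex_fun_rV f ->
             K `&` epigraph f = set0 ->
             forall x, Gminus K (epigraph f) x = Gplus K (epigraph f) x in
  let C := ~ exists (x0 : 'rV[R]_n) (y1 y2 : R),
             [/\ 0 < y1, y1 < y2, ~ K (x0, y1) & K (x0, y2)] in
  (A <-> B) /\ (B <-> C).
Proof.
move=> A B C.
have K0 : K !=set0 by case: hKpt => p [Kp _]; exists p.
have CA : C -> A.
  move=> nogap f f_gt0 cf disj x.
  exact: (epigraph_Gminus_eq_Gplus (no_vertical_gap_down nogap) hKcomp K0 f_gt0 cf disj).
have CB : C -> B.
  by move=> nogap f f_gt0 cvxf; apply: CA nogap f f_gt0 (convex_continuous cvxf).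
have AC : A -> C.
  move=> hA gap; have [f [f_gt0 cf _ disj [x]]] :=
    vertical_gap_counterexample hKcomp hKconv hKpt gap.
  by rewrite (hA f f_gt0 cf disj x) ltxx.
have BC : B -> C.
  move=> hB gap; have [f [f_gt0 _ cvxf disj [x]]] :=
    vertical_gap_counterexample hKcomp hKconv hKpt gap.
  by rewrite (hB f f_gt0 cvxf disj x) ltxx.
split; split.
- by move/AC/CB.
- by move/BC/CA.
- exact: BC.
- exact: CB.
Qed.
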